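(* Let $a,b,c,d\in\mathbb C$ with $a\notin\mathbb Z$ and $d\notin\{0,-1,-2,\dots\}$. Then, as an identity of formal power series in $x,y$, $$\mathrm H_{11}(a,b,c;d;x,y)={}_1F_1(a;d;x)\,F(b,c;1-a;-y)+\sum_{k=1}^\infty\sum_{l=1}^k\frac{(-1)^{k+l}(k-1)!}{(l-1)!\,l!\,(k-l)!}\,\frac{(b)_l(c)_l}{(1-a)_l(d)_k}\,x^ky^l\,{}_1F_1(a+k;d+k;x)\,F(b+l,c+l;1-a+l;-y).$$
   Context: Pochhammer symbol: $(\lambda)_k=\Gamma(\lambda+k)/\Gamma(\lambda)$ for every integer $k$ (possibly negative) whenever defined; $(\lambda)_0=1$. $F(a,b;c;x)=\sum_{k\ge0}\frac{(a)_k(b)_k}{(c)_k k!}x^k$, ${}_1F_1(a;c;x)=\sum_{k\ge0}\frac{(a)_k}{(c)_k k!}x^k$. Confluent Horn function $\mathrm H_{11}(a,b,c;d;x,y)=\sum_{p,q\ge0}\frac{(a)_{p-q}(b)_q(c)_q}{(d)_p\,p!\,q!}x^py^q$. All functions are regarded as formal power series in $x,y$; the infinite double sum converges in the formal (degree) topology. *)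

From HB Require Import structures.
From mathcomp Require Import all_boot all_order all_algebra.
Set Implicit Arguments. Unset Strict Implicit. Unset Printing Implicit Defensive.
Import Order.TTheory GRing.Theory Num.Theory.
Local Open Scope ring_scope.

Section Defs.
Variable C : numClosedFieldType.

(* Pochhammer symbol with integer index: (a)_k = Gamma(a+k)/Gamma(a).
   For k = n >= 0 : a (a+1) ... (a+n-1).
   For k = -(n+1) (Negz n) : 1 / ((a-1)(a-2)...(a-(n+1))). *)
Definition poch (a : C) (k : int) : C :=
  match k with
  | Posz n => \prod_(i < n) (a + i%:R)
  | Negz n => (\prod_(i < n.+1) (a - (i.+1)%:R))^-1
  end.

(* formal power series in one variable, and in two variables x,y,
   given by their coefficient functions: f k = [t^k] f, g p q = [x^p y^q] g *)
Definition fps1 := nat -> C.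
Definition fps2 := nat -> nat -> C.

Definition F11 (a c : C) : fps1 :=
  fun k => poch a k / (poch c k * (k`!)%:R).

Definition F21 (a b c : C) : fps1 :=
  fun k => poch a k * poch b k / (poch c k * (k`!)%:R).

Definition fneg (f : fps1) : fps1 := fun k => (-1) ^+ k * f k.

Definition in_x (f : fps1) : fps2 := fun p q => if q == 0%N then f p else 0.
Definition in_y (f : fps1) : fps2 := fun p q => if p == 0%N then f q else 0.

Definition mono (c : C) (k l : nat) : fps2 :=
  fun p q => if (p == k) && (q == l) then c else 0.

Definition fadd (f g : fps2) : fps2 := fun p q => f p q + g p q.

Definition fmul (f g : fps2) : fps2 :=
  fun p q => \sum_(i < p.+1) \sum_(j < q.+1) f i j * g (p - i)%N (q - j)%N.

(* convergence in the formal (degree) topology: every coefficient of the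
   sequence is eventually constant, equal to that of the limit *)
Definition fps_lim (P : nat -> fps2) (S : fps2) : Prop :=
  forall p q, exists N, forall n, (N <= n)%N -> P n p q = S p q.

Definition H11 (a b c d : C) : fps2 :=
  fun p q => poch a (p%:Z - q%:Z) * poch b q * poch c q
             / (poch d p * (p`!)%:R * (q`!)%:R).

Definition term (a b c d : C) (k l : nat) : fps2 :=
  fmul (mono ((-1) ^+ (k + l) * ((k.-1)`!)%:R
               / (((l.-1)`!)%:R * (l`!)%:R * ((k - l)`!)%:R)
               * (poch b l * poch c l / (poch (1 - a) l * poch d k))) k l)
       (fmul (in_x (F11 (a + k%:R) (d + k%:R)))
             (in_y (fneg (F21 (b + l%:R) (c + l%:R) (1 - a + l%:R))))).

Definition partial (a b c d : C) (n : nat) : fps2 :=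
  fun p q => \sum_(1 <= k < n.+1) \sum_(1 <= l < k.+1) term a b c d k l p q.

End Defs.

(* Compare coefficients of x^p y^q, writing P = 1F1(a;d;x) F(b,c;1-a;-y). Since the shifted
   series are, up to Pochhammer factors, derivatives of the unshifted ones, the (k,l) summand
   contributes [x^p y^q]P * (-1)^k C(p,k) k! C(q,l) C(k-1,l-1) / (a)_k when l <= k <= p, and
   nothing when k > p, so the double series stabilises coefficientwise. Vandermonde's identity sums
   this over l to [x^p y^q]P * (-1)^k C(p,k) (q)_k / (a)_k, and the Chu-Vandermonde identity sums
   over 1 <= k <= p to [x^p y^q]P * ((a-q)_p / (a)_p - 1). The reflection formula
   (a)_(p-q) (1-a)_q = (-1)^q (a-q)_p identifies [x^p y^q]H11 with [x^p y^q]P * (a-q)_p / (a)_p. *)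

From HB Require Import structures.
From mathcomp Require Import all_boot all_order all_algebra.
From mathcomp Require Import ring.
From Stdlib Require Import FunctionalExtensionality.
Import Order.TTheory GRing.Theory Num.Theory.
Local Open Scope ring_scope.

Section Pochhammer.
Context {C : numClosedFieldType}.
Implicit Types (x y : C) (i j k l m n p q : nat).

Lemma poch0 x : poch x 0 = 1.
Proof. by rewrite /= big_ord0. Qed.

Lemma pochS x n : poch x n.+1 = poch x n * (x + n%:R).
Proof. by rewrite /= big_ord_recr. Qed.

Lemma pochD x m n : poch x (m + n)%N = poch x m * poch (x + m%:R) n.
Proof.
elim: n => [|n IH]; first by rewrite addn0 poch0 mulr1.
by rewrite addnS !pochS IH natrD addrA mulrA.
Qed.

Lemma pochSl x n : poch x n.+1 = x * poch (x + 1) n.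
Proof. by rewrite -add1n pochD /= big_ord1 addr0. Qed.

Lemma poch_neq0 x n : (forall i : nat, x + i%:R != 0) -> poch x n != 0.
Proof. by move=> x_nz; apply/prodf_neq0 => i _. Qed.

Lemma poch_reflect x n : poch x n = (-1) ^+ n * poch (1 - x - n%:R) n.
Proof.
have -> : (-1) ^+ n = \prod_(i < n) (-1 : C) by rewrite prodr_const card_ord.
rewrite /poch -big_split (reindex_inj rev_ord_inj); apply: eq_bigr => i _ /=.
by rewrite natrB // -addn1 natrD; ring.
Qed.

Lemma poch_NegzE x m : poch x (Negz m) = (poch (x - m.+1%:R) m.+1)^-1.
Proof.
rewrite /poch (reindex_inj rev_ord_inj); congr (_^-1); apply: eq_bigr => i _ /=.
have le_im : (i <= m)%N by rewrite -ltnS.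
by rewrite subSS -addn1 natrD natrB //; ring.
Qed.

Lemma poch_int_reflect x p q : (forall n : nat, 1 - x + n%:R != 0) ->
  poch x (p%:Z - q%:Z) * poch (1 - x) q = (-1) ^+ q * poch (x - q%:R) p.
Proof.
move=> x_nz; case: (leqP q p) => [le_qp | lt_pq].
  have [m ->] : exists m, p = (q + m)%N by exists (p - q)%N; rewrite subnKC.
  rewrite PoszD addrAC subrr add0r pochD subrK [poch (x - _) q]poch_reflect.
  have -> : 1 - (x - q%:R) - q%:R = 1 - x by ring.
  have sq : (-1) ^+ q * (-1) ^+ q = 1 :> C by rewrite -expr2 sqrr_sign.
  by rewrite -[LHS]mul1r -{1}sq; ring.
have [m ->] : exists m, q = (m.+1 + p)%N.
  by exists (q - p).-1; rewrite prednK ?subn_gt0 // subnK // ltnW.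
rewrite PoszD opprD addrCA subrr addr0 -NegzE poch_NegzE pochD.
have Em : poch (1 - x) m.+1 = (-1) ^+ m.+1 * poch (x - m.+1%:R) m.+1.
  by rewrite poch_reflect; congr (_ * poch _ _); ring.
have Ep : poch (1 - x + m.+1%:R) p = (-1) ^+ p * poch (x - (m.+1 + p)%N%:R) p.
  by rewrite poch_reflect natrD; congr (_ * poch _ _); ring.
have nz : poch (x - m.+1%:R) m.+1 != 0.
  by have := poch_neq0 (1 - x) m.+1 x_nz; rewrite Em mulf_eq0 negb_or => /andP[].
by rewrite Em Ep exprD; field.
Qed.

Definition chu_sum p x y : C :=
  \sum_(k < p.+1) (-1) ^+ k * 'C(p, k)%:R * poch x k / poch y k.

Lemma chu_sumS p x y :
  chu_sum p.+1 x y = chu_sum p x y - x / y * chu_sum p (x + 1) (y + 1).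
Proof.
have -> : chu_sum p x y =
    \sum_(k < p.+2) (-1) ^+ k * 'C(p, k)%:R * poch x k / poch y k.
  by rewrite big_ord_recr /= bin_small // mulr0n mulr0 !mul0r addr0.
rewrite {1}/chu_sum big_ord_recl [in RHS]big_ord_recl -addrA !bin0.
congr (_ + _); rewrite /chu_sum mulr_sumr -sumrB; apply: eq_bigr => i _.
rewrite lift0 binS natrD !pochSl invfM exprS; ring.
Qed.

Lemma chu_vandermonde p x y : (forall n : nat, y + n%:R != 0) ->
  chu_sum p x y = poch (y - x) p / poch y p.
Proof.
elim: p x y => [|p IH] x y y_nz.
  by rewrite /chu_sum big_ord1 /= !big_ord0 !mul1r invr1.
have y1_nz n : y + 1 + n%:R != 0.
  by have := y_nz n.+1; rewrite -natr1 -addrA [1 + _]addrC.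
have y0_nz : y != 0 by have := y_nz 0%N; rewrite addr0.
have Ey : poch (y + 1) p = poch y p * (y + p%:R) / y.
  by rewrite -pochS pochSl mulrC mulKf.
rewrite chu_sumS !IH //.
have -> : y + 1 - (x + 1) = y - x by ring.
rewrite Ey !pochS; field.
by rewrite y0_nz poch_neq0 // y_nz.
Qed.

Lemma natr_fact_neq0 n : (n`!)%:R != 0 :> C.
Proof. by rewrite pnatr_eq0 -lt0n fact_gt0. Qed.

Lemma poch_fact q k : poch (q.+1%:R : C) k * (q`!)%:R = ((q + k)`!)%:R.
Proof.
elim: k => [|k IH]; first by rewrite poch0 mul1r addn0.
by rewrite pochS mulrAC IH addnS factS natrM -natrD addSn mulrC.
Qed.

Lemma poch_nat q k : poch (q%:R : C) k = (k`! * 'C(q + k.-1, k))%:R.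
Proof.
case: q => [|q].
  by case: k => [|k]; rewrite ?poch0 // bin_small // muln0 pochSl mul0r.
apply: (mulIf (natr_fact_neq0 q)).
rewrite poch_fact -natrM -mulnA.
case: k => [|k]; first by rewrite /= bin0 addn0 fact0 !mul1n.
by rewrite /= addSnnS -(bin_fact (leq_addl q k.+1)) addnK mulnCA.
Qed.

Lemma nonint_addn_neq0 x : (forall z : int, x != z%:~R) -> forall n, x + n%:R != 0.
Proof.
move=> x_nonint n; apply: contraNneq (x_nonint (- n%:Z)) => x_n.
by rewrite mulrNz -pmulrn -subr_eq0 opprK x_n.
Qed.

Lemma nonint_subr_addn_neq0 x : (forall z : int, x != z%:~R) ->
  forall n, 1 - x + n%:R != 0.
Proof.
move=> x_nonint n; apply: contraNneq (x_nonint n.+1%:Z) => x_n.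
by rewrite -pmulrn -natr1 -subr_eq0 -oppr0 -x_n; apply/eqP; ring.
Qed.

Lemma nonpos_addn_neq0 x : (forall n, x != - n%:R) -> forall n, x + n%:R != 0.
Proof.
move=> x_nonpos n; apply: contraNneq (x_nonpos n) => x_n.
by rewrite -subr_eq0 opprK x_n.
Qed.

End Pochhammer.

Lemma Vandermonde_pred q k : (0 < k)%N ->
  (\sum_(1 <= l < k.+1) 'C(q, l) * 'C(k.-1, l.-1) = 'C(q + k.-1, k))%N.
Proof.
case: k => [//|k] _ /=.
rewrite -(binomial.Vandermonde q k k.+1) big_ord_recl /= subn0.
rewrite (bin_small (ltnSn k)) muln0 add0n big_add1 /= big_mkord.
by apply: eq_bigr => i _; rewrite subSS bin_sub // -ltnS.
Qed.

Section Coefficients.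
Context {C : numClosedFieldType}.
Implicit Types (f g : fps1 C) (h : fps2 C) (a b c d x y z : C) (i j k l n p q : nat).

Lemma fmul_in_xy f g p q : fmul (in_x f) (in_y g) p q = f p * g q.
Proof.
transitivity (\sum_(i < p.+1 | i == p :> nat) f p * g q); last first.
  by rewrite (big_ord1_eq _ (fun _ => f p * g q)) ltnSn.
rewrite big_mkcond; apply: eq_bigr => i _ /=.
rewrite big_ord_recl big1 => [|j _]; last by rewrite /in_x /= mul0r.
rewrite addr0 /in_x /in_y /= subn0; case: (eqVneq (i : nat) p) => [-> | ne_ip].
  by rewrite subnn !eqxx.
have lt_ip : (i < p)%N by rewrite ltn_neqAle ne_ip -ltnS ltn_ord.
by rewrite subn_eq0 leqNgt lt_ip mulr0.
Qed.

Lemma fmul_mono c k l h p q : fmul (mono c k l) h p q =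
  if (k <= p)%N && (l <= q)%N then c * h (p - k)%N (q - l)%N else 0.
Proof.
transitivity (\sum_(i < p.+1 | i == k :> nat)
               \sum_(j < q.+1 | j == l :> nat) c * h (p - i)%N (q - j)%N).
  rewrite big_mkcond; apply: eq_bigr => i _ /=; rewrite /mono.
  case: (i == k :> nat) => /=; last by rewrite big1 // => j _; rewrite mul0r.
  by rewrite [RHS]big_mkcond; apply: eq_bigr => j _; case: (j == l :> nat); rewrite ?mul0r.
rewrite (big_ord1_eq _ (fun i => \sum_(j < q.+1 | j == l :> nat) c * h (p - i)%N (q - j)%N)).
rewrite (big_ord1_eq _ (fun j => c * h (p - k)%N (q - j)%N)) !ltnS.
by case: (k <= p)%N.
Qed.

Lemma F11_shift x y k i : F11 x y (k + i) =
  poch x k / poch y k * F11 (x + k%:R) (y + k%:R) i / ('C(k + i, k) * k`!)%:R.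
Proof.
rewrite /F11 !pochD -{1}(bin_fact (leq_addr i k)) addKn !natrM !invfM; ring.
Qed.

Lemma F21_shift x y z l j : F21 x y z (l + j) =
  poch x l * poch y l / poch z l * F21 (x + l%:R) (y + l%:R) (z + l%:R) j
  / ('C(l + j, l) * l`!)%:R.
Proof.
rewrite /F21 !pochD -{1}(bin_fact (leq_addr j l)) addKn !natrM !invfM; ring.
Qed.

Lemma fact_pred_ratio k l : (0 < l)%N -> (l <= k)%N ->
  ((k.-1)`!)%:R / (((l.-1)`!)%:R * ((k - l)`!)%:R) = 'C(k.-1, l.-1)%:R :> C.
Proof.
case: l => [//|l] _; case: k => [//|k] /=; rewrite ltnS subSS => le_lk.
by rewrite -(bin_fact le_lk) !natrM mulfK // mulf_neq0 ?natr_fact_neq0.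
Qed.

Lemma term_eq0 a b c d k l p q : (p < k)%N -> term a b c d k l p q = 0.
Proof. by move=> lt_pk; rewrite /term fmul_mono leqNgt lt_pk. Qed.

Lemma partial_stable a b c d n p q : (p <= n)%N ->
  partial a b c d n p q = partial a b c d p p q.
Proof.
move=> le_pn; rewrite /partial (big_cat_nat _ (n := p.+1)) ?ltnS //=.
rewrite [X in _ + X]big1_seq ?addr0 // => k /andP [_].
rewrite mem_index_iota => /andP [lt_pk _].
by apply: big1 => l _; apply: term_eq0.
Qed.

End Coefficients.

Section H11Expansion.
Variables (C : numClosedFieldType) (a b c d : C).
Hypotheses (a_nz : forall n : nat, a + n%:R != 0)
           (a1_nz : forall n : nat, 1 - a + n%:R != 0)
           (d_nz : forall n : nat, d + n%:R != 0).
Implicit Types (k l p q : nat).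

Lemma term_coef k l p q : (0 < l)%N -> (l <= k)%N -> (k <= p)%N ->
  term a b c d k l p q = F11 a d p * fneg (F21 b c (1 - a)) q *
    ((-1) ^+ k * 'C(p, k)%:R * (k`!)%:R * ('C(q, l) * 'C(k.-1, l.-1))%:R / poch a k).
Proof.
move=> l_gt0 le_lk le_kp; rewrite /term fmul_mono le_kp andTb.
case: (leqP l q) => [le_lq | lt_ql].
  2: by rewrite (bin_small lt_ql) mul0n !(mulr0, mul0r).
have [i ->] : exists i, p = (k + i)%N by exists (p - k)%N; rewrite subnKC.
have [j ->] : exists j, q = (l + j)%N by exists (q - l)%N; rewrite subnKC.
rewrite fmul_in_xy /fneg !addKn F11_shift F21_shift !natrM -fact_pred_ratio //.
have nz_bin m n : 'C(m + n, m)%:R != 0 :> C by rewrite pnatr_eq0 -lt0n bin_gt0 leq_addr.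
rewrite !exprD; field.
by rewrite !(poch_neq0, nz_bin, natr_fact_neq0).
Qed.

Lemma sum_term_coef k p q : (0 < k)%N -> (k <= p)%N ->
  \sum_(1 <= l < k.+1) term a b c d k l p q = F11 a d p * fneg (F21 b c (1 - a)) q *
    ((-1) ^+ k * 'C(p, k)%:R * poch (q%:R) k / poch a k).
Proof.
move=> k_gt0 le_kp.
transitivity (\sum_(1 <= l < k.+1) F11 a d p * fneg (F21 b c (1 - a)) q *
  ((-1) ^+ k * 'C(p, k)%:R * (k`!)%:R * ('C(q, l) * 'C(k.-1, l.-1))%:R / poch a k)).
  by apply: eq_big_nat => l /andP [l_gt0 lt_lk]; apply: term_coef.
rewrite -mulr_sumr -mulr_suml -mulr_sumr -natr_sum Vandermonde_pred //.
by rewrite poch_nat natrM !mulrA.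
Qed.

Lemma H11_coef p q : H11 a b c d p q =
  F11 a d p * fneg (F21 b c (1 - a)) q * (poch (a - q%:R) p / poch a p).
Proof.
have Eint := poch_int_reflect a p q a1_nz.
rewrite /H11 /F11 /F21 /fneg.
have -> : poch a (p%:Z - q%:Z) = (-1) ^+ q * poch (a - q%:R) p / poch (1 - a) q.
  by rewrite -Eint mulfK // poch_neq0.
field.
by rewrite !(poch_neq0, natr_fact_neq0).
Qed.

Lemma partial_diag p q : partial a b c d p p q =
  H11 a b c d p q - fmul (in_x (F11 a d)) (in_y (fneg (F21 b c (1 - a)))) p q.
Proof.
rewrite /partial fmul_in_xy H11_coef -(chu_vandermonde p q%:R a a_nz).
transitivity (\sum_(1 <= k < p.+1) F11 a d p * fneg (F21 b c (1 - a)) q *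
    ((-1) ^+ k * 'C(p, k)%:R * poch (q%:R) k / poch a k)).
  by apply: eq_big_nat => k /andP [k_gt0 lt_kp]; apply: sum_term_coef.
rewrite -mulr_sumr /chu_sum.
rewrite -(big_mkord xpredT (fun k => (-1) ^+ k * 'C(p, k)%:R * poch (q%:R : C) k / poch a k)).
rewrite big_ltn // !poch0 bin0 invr1.
by rewrite !mul1r mulrDr mulr1 addrAC subrr add0r.
Qed.

End H11Expansion.

Theorem mainTheorem12 (C : numClosedFieldType) (a b c d : C)
  (ha : forall z : int, a != z%:~R)
  (hd : forall n : nat, d != - n%:R) :
  exists S : fps2 C,
    fps_lim (partial a b c d) S /\
    H11 a b c d =
      fadd (fmul (in_x (F11 a d)) (in_y (fneg (F21 b c (1 - a))))) S.
Proof.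
have a_nz := nonint_addn_neq0 _ ha.
have a1_nz := nonint_subr_addn_neq0 _ ha.
have d_nz := nonpos_addn_neq0 _ hd.
set P0 := fmul (in_x (F11 a d)) (in_y (fneg (F21 b c (1 - a)))).
exists (fun p q => H11 a b c d p q - P0 p q); split.
  move=> p q; exists p => n le_pn.
  by rewrite partial_stable // partial_diag.
do 2 apply: functional_extensionality => ?.
by rewrite /fadd addrC subrK.
Qed.
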